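(* Let $0<\varepsilon\le1/2$, $k$ a positive integer and $OPT\ge0$. Let $X\subset\mathbb{R}^d$ be a finite nonempty (multi)set and $C\subset\mathbb{R}^d$ a finite nonempty set with $\Phi(C,X)\le\frac{\varepsilon}{6k}\,OPT$. For each $x\in X$ let $c(x)\in C$ be a nearest point of $C$ to $x$, and let $X'=\{c(x):x\in X\}$ (as a multiset). If $m''\in\mathbb{R}^d$ satisfies $\Phi(m'',X')\le(1+\frac\varepsilon8)\Delta(X')$, then $$\Phi(m'',X)\le\left(1+\frac\varepsilon2\right)\Delta(X) + \frac{\varepsilon}{2k}\,OPT.$$
   Context: $\mu(Y)$ denotes the centroid of a finite multiset $Y$, $\Delta(Y)=\sum_{y\in Y}\|y-\mu(Y)\|^2$. For a point $p$, $\Phi(p,Y) = \sum_{y\in Y}\|y-p\|^2$; for a finite set $C$, $\Phi(C,Y) = \sum_{y\in Y}\min_{c\in C}\|y-c\|^2$. *)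

(* Points of R^d are row vectors 'rV[R]_d over a real field R;
   finite multisets are sequences. *)
From mathcomp Require Import all_boot all_order all_algebra.
Set Implicit Arguments. Unset Strict Implicit. Unset Printing Implicit Defensive.
Import Order.TTheory GRing.Theory Num.Theory.
Local Open Scope ring_scope.

Section Defs.
Variables (R : realFieldType) (d : nat).

Definition sqdist (x y : 'rV[R]_d) : R := \sum_(i < d) (x 0 i - y 0 i) ^+ 2.

Definition centroid (Y : seq 'rV[R]_d) : 'rV[R]_d :=
  (size Y)%:R^-1 *: \sum_(y <- Y) y.

Definition Phi (p : 'rV[R]_d) (Y : seq 'rV[R]_d) : R :=
  \sum_(y <- Y) sqdist y p.

Definition Delta (Y : seq 'rV[R]_d) : R := Phi (centroid Y) Y.

(* min_{c in C} ||y - c||^2, for a nonempty finite set C given as a seq *)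
Definition mindist (C : seq 'rV[R]_d) (y : 'rV[R]_d) : R :=
  foldr (fun c m => Num.min (sqdist y c) m) (sqdist y (head 0 C)) C.

Definition PhiC (C Y : seq 'rV[R]_d) : R := \sum_(y <- Y) mindist C y.

End Defs.

(* Replacing every point x by its nearest centre c(x) moves the centroid by at
   most the average displacement: n ||mu(X) - mu(X')||^2 <= sum_x ||x - c x||^2
   =: D, and D <= Phi(C, X) is tiny.  By the parallel-axis identity
   Phi(m, Y) = Delta(Y) + |Y| ||mu(Y) - m||^2, the excess cost of m'' on X is
   n ||mu(X) - m''||^2 <= 2 n ||mu(X) - mu(X')||^2 + 2 n ||mu(X') - m''||^2
   <= 2 D + (eps/4) Delta(X'), and Delta(X') <= Phi(mu(X), X') <= 2 D + 2 Delta(X). *)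

From mathcomp Require Import all_boot all_order all_algebra.
From mathcomp Require Import ring lra.
Import Order.TTheory GRing.Theory Num.Theory.
Local Open Scope ring_scope.
Set Implicit Arguments. Unset Strict Implicit.

Section ScalarVariance.
Variable R : realFieldType.

Lemma sumr_const_seq (T : Type) (s : seq T) (a : R) :
  \sum_(x <- s) a = a * (size s)%:R.
Proof. by rewrite big_const_seq count_predT iter_addr addr0 mulr_natr. Qed.

Lemma sum_sqr_sub_mean (T : Type) (s : seq T) (f : T -> R) (p : R) :
  (0 < size s)%N ->
  \sum_(x <- s) (f x - p) ^+ 2 =
  \sum_(x <- s) (f x - (size s)%:R^-1 * \sum_(y <- s) f y) ^+ 2 +
  (size s)%:R * ((size s)%:R^-1 * \sum_(y <- s) f y - p) ^+ 2.
Proof.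
move=> s_gt0; set n := (size s)%:R; set S := \sum_(y <- s) f y.
have n_neq0 : n != 0 by rewrite pnatr_eq0 -lt0n.
set mu := n^-1 * S.
have S_def : S = n * mu by rewrite /mu mulrA mulfV // mul1r.
have -> : \sum_(x <- s) (f x - p) ^+ 2 =
    \sum_(x <- s) ((f x - mu) ^+ 2 + (2 * (mu - p) * f x + (p ^+ 2 - mu ^+ 2))).
  by apply: eq_bigr => x _; ring.
rewrite big_split /= big_split /= -mulr_sumr -/S sumr_const_seq -/n S_def.
congr (_ + _); ring.
Qed.

Lemma mean_sqr_le (T : Type) (s : seq T) (f : T -> R) :
  (0 < size s)%N ->
  (size s)%:R * ((size s)%:R^-1 * \sum_(x <- s) f x) ^+ 2 <= \sum_(x <- s) f x ^+ 2.
Proof.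
move=> s_gt0; have := sum_sqr_sub_mean f 0 s_gt0.
under eq_bigr do rewrite subr0.
rewrite subr0 => ->; rewrite lerDr.
by apply: sumr_ge0 => x _; apply: sqr_ge0.
Qed.

End ScalarVariance.

Section Points.
Variables (R : realFieldType) (d : nat).
Implicit Types (x y z p : 'rV[R]_d) (X Y C : seq 'rV[R]_d).

Lemma sqdist_ge0 x y : 0 <= sqdist x y.
Proof. by apply: sumr_ge0 => i _; apply: sqr_ge0. Qed.

Lemma sqdistC x y : sqdist x y = sqdist y x.
Proof. by apply: eq_bigr => i _; ring. Qed.

Lemma sqdist_le2 x y z : sqdist x z <= 2 * sqdist x y + 2 * sqdist y z.
Proof.
rewrite /sqdist !mulr_sumr -big_split /=; apply: ler_sum => i _.
have := sqr_ge0 (x 0 i - 2 * y 0 i + z 0 i); nra.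
Qed.

Lemma centroidE Y i : centroid Y 0 i = (size Y)%:R^-1 * \sum_(y <- Y) y 0 i.
Proof. by rewrite /centroid mxE summxE. Qed.

Lemma Phi_parallel_axis p Y : (0 < size Y)%N ->
  Phi p Y = Delta Y + (size Y)%:R * sqdist (centroid Y) p.
Proof.
move=> Y_gt0; rewrite /Delta /Phi /sqdist.
rewrite [LHS]exchange_big [X in _ = X + _]exchange_big /= mulr_sumr -big_split /=.
apply: eq_bigr => i _; rewrite !centroidE.
exact: (sum_sqr_sub_mean (fun y : 'rV[R]_d => y 0 i)).
Qed.

Lemma Delta_ge0 Y : 0 <= Delta Y.
Proof. by apply: sumr_ge0 => y _; apply: sqdist_ge0. Qed.

Lemma Delta_le_Phi p Y : (0 < size Y)%N -> Delta Y <= Phi p Y.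
Proof.
move=> Y_gt0; rewrite (Phi_parallel_axis p Y_gt0) lerDl.
by rewrite mulr_ge0 ?ler0n ?sqdist_ge0.
Qed.

Lemma Phi_map_le p X (f : 'rV[R]_d -> 'rV[R]_d) :
  Phi p (map f X) <= 2 * \sum_(x <- X) sqdist x (f x) + 2 * Phi p X.
Proof.
rewrite /Phi big_map !mulr_sumr -big_split /=; apply: ler_sum => x _.
by rewrite (sqdistC x); apply: sqdist_le2.
Qed.

Lemma sqdist_centroid_map_le X (f : 'rV[R]_d -> 'rV[R]_d) : (0 < size X)%N ->
  (size X)%:R * sqdist (centroid X) (centroid (map f X)) <=
  \sum_(x <- X) sqdist x (f x).
Proof.
move=> X_gt0; rewrite /sqdist mulr_sumr [X in _ <= X]exchange_big /=.
apply: ler_sum => i _; rewrite !centroidE size_map big_map -mulrBr -sumrB.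
exact: (mean_sqr_le (fun x : 'rV[R]_d => x 0 i - f x 0 i)).
Qed.

Lemma Phi_le_of_approx_centroid_map X (f : 'rV[R]_d -> 'rV[R]_d) m (delta : R) :
  (0 < size X)%N -> 0 <= delta ->
  Phi m (map f X) <= (1 + delta) * Delta (map f X) ->
  Phi m X <= (1 + 4 * delta) * Delta X + (2 + 4 * delta) * \sum_(x <- X) sqdist x (f x).
Proof.
move=> X_gt0 delta_ge0 m_approx.
have fX_gt0 : (0 < size (map f X))%N by rewrite size_map.
set D := \sum_(x <- X) sqdist x (f x); set n : R := (size X)%:R.
have n_ge0 : 0 <= n by rewrite ler0n.
have centroid_shift : n * sqdist (centroid X) (centroid (map f X)) <= D.
  exact: sqdist_centroid_map_le.
have m_close : n * sqdist (centroid (map f X)) m <= delta * Delta (map f X).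
  by move: m_approx; rewrite (Phi_parallel_axis m fX_gt0) size_map -/n; lra.
have m_far : n * sqdist (centroid X) m <=
    2 * (n * sqdist (centroid X) (centroid (map f X))) +
    2 * (n * sqdist (centroid (map f X)) m).
  have := ler_wpM2l n_ge0 (sqdist_le2 (centroid X) (centroid (map f X)) m); lra.
have Delta_map : Delta (map f X) <= 2 * D + 2 * Delta X.
  exact: le_trans (Delta_le_Phi (centroid X) fX_gt0) (Phi_map_le _ _ _).
have := ler_wpM2l delta_ge0 Delta_map.
rewrite (Phi_parallel_axis m X_gt0) -/n; lra.
Qed.

Lemma foldr_min_attained (T : eqType) (f : T -> R) init (s : seq T) :
  foldr (fun c m => Num.min (f c) m) init s = init \/
  exists2 c, c \in s & foldr (fun c m => Num.min (f c) m) init s = f c.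
Proof.
elim: s => [|a s IH] /=; first by left.
case: leP => _; first by right; exists a; rewrite ?mem_head.
case: IH => [->|[c c_in ->]]; first by left.
by right; exists c; rewrite // in_cons c_in orbT.
Qed.

Lemma mindist_attained C y : C != [::] ->
  exists2 c, c \in C & mindist C y = sqdist y c.
Proof.
move=> C_neq0; rewrite /mindist.
case: (foldr_min_attained (sqdist y) (sqdist y (head 0 C)) C) => [->|//].
by exists (head 0 C) => //; case: C C_neq0 => //= a C _; apply: mem_head.
Qed.

Lemma sum_sqdist_nearest_le_PhiC C X (c : 'rV[R]_d -> 'rV[R]_d) : C != [::] ->
  (forall x, x \in X -> forall y, y \in C -> sqdist x (c x) <= sqdist x y) ->
  \sum_(x <- X) sqdist x (c x) <= PhiC C X.
Proof.
move=> C_neq0 c_nearest; rewrite /PhiC big_seq [X in _ <= X]big_seq.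
apply: ler_sum => x x_in; have [y y_in ->] := mindist_attained x C_neq0.
exact: c_nearest.
Qed.

End Points.

Theorem mainTheorem8 (R : realFieldType) (d : nat) (eps : R) (k : nat) (OPT : R)
    (X C : seq 'rV[R]_d) (c : 'rV[R]_d -> 'rV[R]_d) (m'' : 'rV[R]_d) :
  0 < eps -> eps <= 2^-1 -> (0 < k)%N -> 0 <= OPT ->
  X != [::] -> C != [::] ->
  PhiC C X <= eps / (6 * k%:R) * OPT ->
  (forall x, x \in X -> c x \in C /\ (forall y, y \in C -> sqdist x (c x) <= sqdist x y)) ->
  Phi m'' (map c X) <= (1 + eps / 8) * Delta (map c X) ->
  Phi m'' X <= (1 + eps / 2) * Delta X + eps / (2 * k%:R) * OPT.
Proof.
move=> eps_gt0 eps_le k_gt0 OPT_ge0 X_neq0 C_neq0 PhiC_small c_nearest m''_approx.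
have X_gt0 : (0 < size X)%N by rewrite lt0n size_eq0.
set Q := eps / (6 * k%:R) * OPT.
have Q_ge0 : 0 <= Q by rewrite /Q mulr_ge0 // divr_ge0 ?ltW // mulr_gt0 ?ltr0n.
have -> : eps / (2 * k%:R) * OPT = 3 * Q.
  by rewrite /Q; field; rewrite pnatr_eq0 -lt0n.
have D_le_Q : \sum_(x <- X) sqdist x (c x) <= Q.
  apply: le_trans PhiC_small.
  by apply: sum_sqdist_nearest_le_PhiC => // x /c_nearest [].
have eps8_ge0 : 0 <= eps / 8 by lra.
have := Phi_le_of_approx_centroid_map X_gt0 eps8_ge0 m''_approx.
have : eps * \sum_(x <- X) sqdist x (c x) <= eps * Q by rewrite ler_pM2l.
have : eps * Q <= 2^-1 * Q by rewrite ler_wpM2r.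
clearbody Q; lra.
Qed.
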